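(* Let $A=(V_\exists,V_\forall,E,E_f)$ be a fair game arena, $\alpha$ an $\omega$-regular winning condition over $V$, and $v\in V$. Then $$\exists s\in\Sigma^f.\,\forall t\in\Pi^f.\,\mathsf{play}_v(s,t)\in\alpha$$ holds if and only if $$\exists s\in\Sigma.\,\forall t\in\Pi.\,\mathsf{fair}_\exists(\mathsf{play}_v(s,t))\wedge\big(\mathsf{fair}_\forall(\mathsf{play}_v(s,t))\Rightarrow\mathsf{play}_v(s,t)\in\alpha\big)$$ holds.
   Context: A fair game arena $A=(V_\exists,V_\forall,E,E_f)$: finite node set $V=V_\exists\cup V_\forall$ (disjoint), right-total moves $E\subseteq V\times V$, fair moves $E_f\subseteq E$. A play is an infinite sequence $\tau=v_0v_1\ldots$ with $(v_j,v_{j+1})\in E$; $\tau_m$ is its sequence of moves; $\mathsf{Inf}$ denotes the set of elements occurring infinitely often. For $i\in\{\exists,\forall\}$, $\tau$ is $i$-fair ($\mathsf{fair}_i(\tau)$) if for all $u\in V_i\cap\mathsf{Inf}(\tau)$, every $(u,u')\in E_f$ is in $\mathsf{Inf}(\tau_m)$. A strategy for player $i$ is a function $p:V^*\cdot V_i\to V$ with $p(w\cdot u)\in E(u)$; $\Sigma$ ($\Pi$) is the set of strategies of $\exists$ ($\forall$); $\mathsf{play}_v(s,t)$ is the unique play from $v$ compliant with $s$ and $t$. A strategy is $i$-fair if every play it admits is $i$-fair; $\Sigma^f$, $\Pi^f$ are the sets of $\exists$-fair and $\forall$-fair strategies. An $\omega$-regular winning condition is an $\omega$-regular language $\alpha\subseteq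 V^\omega$. *)

From mathcomp Require Import all_boot.
Set Implicit Arguments. Unset Strict Implicit. Unset Printing Implicit Defensive.

Section Arena.
Variable V : finType.
(* Vex : membership in V_exists; V_forall is its complement. *)
Variable Vex : pred V.
Variables E Ef : rel V.

Inductive player := Exists | Forall.
Definition Vpl (i : player) : pred V :=
  match i with Exists => Vex | Forall => predC Vex end.

Definition fair_arena : Prop :=
  (forall u, exists u', E u u') /\ (forall u u', Ef u u' -> E u u').

Definition is_play (tau : nat -> V) : Prop := forall n, E (tau n) (tau n.+1).

Definition inf_often (tau : nat -> V) (u : V) : Prop :=
  forall N, exists2 n, N <= n & tau n = u.

Definition inf_often_move (tau : nat -> V) (u u' : V) : Prop :=
  forall N, exists2 n, N <= n & (tau n = u /\ tau n.+1 = u').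

Definition fair (i : player) (tau : nat -> V) : Prop :=
  forall u, Vpl i u -> inf_often tau u ->
    forall u', Ef u u' -> inf_often_move tau u u'.

(* A strategy for player i: a function on histories w.u (w : prefix, u : last
   node); only its values at u in V_i matter, where it must pick a successor. *)
Definition strategy := seq V -> V -> V.
Definition is_strategy (i : player) (p : strategy) : Prop :=
  forall w u, Vpl i u -> E u (p w u).

Definition prefix (tau : nat -> V) (n : nat) : seq V := [seq tau k | k <- iota 0 n].

Definition complies (i : player) (p : strategy) (tau : nat -> V) : Prop :=
  forall n, Vpl i (tau n) -> tau n.+1 = p (prefix tau n) (tau n).

Definition fair_strategy (i : player) (p : strategy) : Prop :=
  forall tau, is_play tau -> complies i p tau -> fair i tau.

Fixpoint play_hist (v : V) (s t : strategy) (n : nat) : seq V * V :=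
  match n with
  | 0 => ([::], v)
  | n'.+1 => let: (w, u) := play_hist v s t n' in
             (rcons w u, if Vex u then s w u else t w u)
  end.
Definition play (v : V) (s t : strategy) : nat -> V :=
  fun n => (play_hist v s t n).2.

End Arena.

Record buchi (A : finType) := Buchi {
  bstate : finType;
  binit : pred bstate;
  btrans : bstate -> A -> bstate -> bool;
  bacc : pred bstate }.

Definition buchi_accepts (A : finType) (B : buchi A) (w : nat -> A) : Prop :=
  exists r : nat -> bstate B,
    [/\ binit (r 0), (forall n, btrans (r n) (w n) (r n.+1))
      & forall N, exists2 n, N <= n & bacc (r n)].

Definition omega_regular (A : finType) (alpha : (nat -> A) -> Prop) : Prop :=
  exists B : buchi A, forall w, alpha w <-> buchi_accepts B w.

From Pilot Require Import Defs.
From mathcomp Require Import all_boot zify.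
From Stdlib Require Import Classical ClassicalEpsilon FunctionalExtensionality.
Set Implicit Arguments. Unset Strict Implicit. Unset Printing Implicit Defensive.

(** Both directions patch strategies with the round-robin strategy, which at a
    node u plays the successor of u indexed by the number of earlier visits to
    u modulo the out-degree; any play that eventually follows it is fair for
    its player.
    (=>) If the play P of the ∃-fair winning strategy s against some t is
    ∀-fair, then P is also the play of s against the ∀-fair strategy "follow P,
    and play round robin once the play has left P", so P is winning.
    (<=) Restrict s to the histories reachable from v under s and play round
    robin elsewhere.  This changes no play from v, and a play compliant with
    the restricted strategy either stays reachable forever, and is then a play
    of s from v (hence ∃-fair by assumption), or eventually plays round
    robin. *)

Section Prefixes.
Variable V : finType.
Implicit Types (tau : nat -> V) (h : seq V).

Lemma prefixS tau n : Defs.prefix tau n.+1 = rcons (Defs.prefix tau n) (tau n).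
Proof. by rewrite /Defs.prefix -addn1 iotaD map_cat /= add0n cats1. Qed.

Lemma size_prefix tau n : size (Defs.prefix tau n) = n.
Proof. by rewrite size_map size_iota. Qed.

Lemma take_prefix tau m n : take m (Defs.prefix tau n) = Defs.prefix tau (minn m n).
Proof. by rewrite /Defs.prefix -map_take take_iota. Qed.

Lemma nth_prefix x0 tau n k : k < n -> nth x0 (Defs.prefix tau n) k = tau k.
Proof. by move=> lt_kn; rewrite (nth_map 0) ?size_iota // nth_iota. Qed.

Lemma eq_prefix tau tau' n :
  (forall k, k < n -> tau k = tau' k) -> Defs.prefix tau n = Defs.prefix tau' n.
Proof. by move=> eq_tau; apply/eq_in_map => k; rewrite mem_iota => /eq_tau. Qed.

Lemma count_prefixS u tau n :
  count_mem u (Defs.prefix tau n.+1) =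
  count_mem u (Defs.prefix tau n) + (tau n == u).
Proof. by rewrite prefixS -cats1 count_cat /= addn0. Qed.

Definition prefix_of tau h : Prop := h = Defs.prefix tau (size h).

Lemma prefix_of_prefix tau n : prefix_of tau (Defs.prefix tau n).
Proof. by rewrite /prefix_of size_prefix. Qed.

Lemma prefix_of_take tau h m : prefix_of tau h -> prefix_of tau (take m h).
Proof. by rewrite /prefix_of size_take_min => {1}->; rewrite take_prefix. Qed.

Lemma prefix_of_rcons tau h u : prefix_of tau (rcons h u) -> u = tau (size h).
Proof. by rewrite /prefix_of size_rcons prefixS => /rcons_inj[_ ->]. Qed.

Lemma prefix_of_all_eq tau tau' :
  (forall n, prefix_of tau' (Defs.prefix tau n)) -> tau = tau'.
Proof.
move=> pre; apply: functional_extensionality => n.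
have := pre n.+1; rewrite /prefix_of size_prefix => /(congr1 (nth (tau n) ^~ n)).
by rewrite !nth_prefix.
Qed.

End Prefixes.

Section Visits.
Variables (V : finType) (tau : nat -> V) (u : V).
Let visits n := count_mem u (Defs.prefix tau n).

Lemma next_visit M N : M <= N -> tau N = u ->
  exists2 n, M <= n & tau n = u /\ visits n = visits M.
Proof.
move=> /subnK <-; move: (N - M) => d.
elim: d M => [|d IH] M tauN; first by exists M.
have [tauM | tauM] := eqVneq (tau M) u; first by exists M.
have [|n ltMn [taun visn]] := IH M.+1; first by rewrite addnS -addSn.
by exists n; rewrite 1?ltnW // visn /visits count_prefixS (negPf tauM) addn0.
Qed.

Lemma visit_with_count : inf_often tau u ->
  forall M d, exists2 n, M <= n & tau n = u /\ visits n = visits M + d.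
Proof.
move=> inf M d.
have first_visit K : exists2 n, K <= n & tau n = u /\ visits n = visits K.
  by have [N leKN tauN] := inf K; exact: next_visit leKN tauN.
elim: d M => [|d IH] M; first by rewrite addn0.
have [n leMn [taun visn]] := first_visit M; have [m ltnm [taum vism]] := IH n.+1.
exists m; first lia.
by rewrite vism /visits count_prefixS taun eqxx -/(visits n) visn addn1 addSnnS.
Qed.
End Visits.

Section Arena.
Variables (V : finType) (Vex : pred V) (E Ef : rel V).
Hypothesis E_total : forall u, exists u', E u u'.
Hypothesis Ef_sub_E : forall u u', Ef u u' -> E u u'.
Implicit Types (tau : nat -> V) (p q s t : strategy V) (i : player).

Definition succs u : seq V := [seq u' <- enum V | E u u'].

Definition round_robin : strategy V :=
  fun w u => nth u (succs u) (count_mem u w %% size (succs u)).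

Lemma round_robin_move w u : E u (round_robin w u).
Proof.
have [u' Euu'] := E_total u.
have succs_u' : u' \in succs u by rewrite mem_filter Euu' mem_enum.
have succs_gt0 : 0 < size (succs u) by case: (succs u) succs_u'.
have : round_robin w u \in succs u by rewrite mem_nth // ltn_mod.
by rewrite mem_filter => /andP[].
Qed.

Definition eventually_complies i p tau : Prop :=
  exists N, forall n, N <= n -> Vpl Vex i (tau n) ->
    tau n.+1 = p (Defs.prefix tau n) (tau n).

Lemma round_robin_fair i tau :
  eventually_complies i round_robin tau -> fair Vex Ef i tau.
Proof.
move=> [N0 rr_tau] u Vi_u inf_u u' Ef_uu' N.
set L := succs u; set k := index u' L.
have k_lt : k < size L by rewrite index_mem mem_filter Ef_sub_E // mem_enum.
set M := maxn N N0; set c0 := count_mem u (Defs.prefix tau M).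
(* The visit to u numbered c0 * size L + k, i.e. k modulo size L, moves to u'. *)
have [n leMn [taun visn]] := visit_with_count inf_u M (c0 * size L + k - c0).
have {}visn : count_mem u (Defs.prefix tau n) = c0 * size L + k.
  by rewrite visn subnKC //; nia.
exists n; first lia.
split=> //; rewrite rr_tau ?taun //; last lia.
by rewrite /round_robin visn -/L modnMDl modn_small // nth_index // -index_mem.
Qed.

Definition guarded (H : seq V -> Prop) p q : strategy V :=
  fun w u => if excluded_middle_informative (H (rcons w u)) then p w u else q w u.

Lemma guarded_in H p q w u : H (rcons w u) -> guarded H p q w u = p w u.
Proof. by rewrite /guarded; case: excluded_middle_informative. Qed.

Lemma guarded_out H p q w u : ~ H (rcons w u) -> guarded H p q w u = q w u.
Proof. by rewrite /guarded; case: excluded_middle_informative. Qed.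

Definition prefix_closed (H : seq V -> Prop) : Prop :=
  forall h m, H h -> H (take m h).

Lemma complies_guarded H p q i tau :
  prefix_closed H -> complies Vex i (guarded H p q) tau ->
  (forall n, H (Defs.prefix tau n)) /\ complies Vex i p tau \/
  eventually_complies i q tau.
Proof.
move=> closedH comp_tau.
have [inH | /not_all_ex_not[N outH]] :=
  classic (forall n, H (Defs.prefix tau n)).
  by left; split=> // n Vi_n; rewrite comp_tau // guarded_in // -prefixS.
right; exists N => n leNn Vi_n; rewrite comp_tau // guarded_out // -prefixS => inH.
by apply: outH; rewrite -(minn_idPl (leqW leNn)) -take_prefix; apply: closedH.
Qed.

Lemma play_hist_prefix v s t n :
  (play_hist Vex v s t n).1 = Defs.prefix (play Vex v s t) n.
Proof.
elim: n => [|n IH] //; rewrite prefixS -IH /play /=.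
by case: (play_hist Vex v s t n).
Qed.

Lemma playS v s t n :
  play Vex v s t n.+1 =
  let w := Defs.prefix (play Vex v s t) n in let u := play Vex v s t n in
  if Vex u then s w u else t w u.
Proof. by rewrite -play_hist_prefix /play /=; case: (play_hist Vex v s t n). Qed.

Lemma play_is_play v s t :
  is_strategy Vex E Exists s -> is_strategy Vex E Forall t ->
  is_play E (play Vex v s t).
Proof.
move=> s_move t_move n; rewrite playS /=.
by case: ifP => Vex_n; [apply: s_move | apply: t_move; rewrite /= Vex_n].
Qed.

Lemma play_complies_Exists v s t : complies Vex Exists s (play Vex v s t).
Proof. by move=> n /= Vex_n; rewrite playS /= Vex_n. Qed.

Lemma play_complies_Forall v s t : complies Vex Forall t (play Vex v s t).
Proof. by move=> n /= /negPf Vex_n; rewrite playS /= Vex_n. Qed.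

Lemma play_complies v s t tau :
  tau 0 = v -> complies Vex Exists s tau -> complies Vex Forall t tau ->
  play Vex v s t = tau.
Proof.
move=> tau0 comp_s comp_t; apply: functional_extensionality.
elim/ltn_ind => -[|n] IH //.
rewrite playS /= (@eq_prefix _ _ tau) => [|k lt_kn]; last exact/IH/ltnW.
rewrite IH //; case: ifP => Vex_n; first exact/esym/comp_s.
by apply/esym/comp_t; rewrite /= Vex_n.
Qed.

Definition follow tau : strategy V :=
  guarded (prefix_of tau) (fun w _ => tau (size w).+1) round_robin.

Lemma follow_move tau : is_play E tau -> forall w u, E u (follow tau w u).
Proof.
move=> tau_play w u.
have [pre | not_pre] := classic (prefix_of tau (rcons w u)).
  by rewrite /follow guarded_in // {1}(prefix_of_rcons pre); exact: tau_play.
by rewrite /follow guarded_out //; exact: round_robin_move.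
Qed.

Lemma complies_follow i tau : complies Vex i (follow tau) tau.
Proof.
move=> n _; rewrite /follow guarded_in ?size_prefix // -prefixS.
exact: prefix_of_prefix.
Qed.

Lemma follow_fair_strategy i tau :
  fair Vex Ef i tau -> fair_strategy Vex E Ef i (follow tau).
Proof.
move=> fair_tau tau' _ /(complies_guarded (@prefix_of_take _ tau))[[pre _] | ev].
  by rewrite (prefix_of_all_eq pre).
exact: round_robin_fair.
Qed.

Definition reachable v s (h : seq V) : Prop :=
  exists2 t, is_strategy Vex E Forall t & prefix_of (play Vex v s t) h.

Definition restrict v s : strategy V := guarded (reachable v s) s round_robin.

Lemma restrict_move v s :
  is_strategy Vex E Exists s -> is_strategy Vex E Exists (restrict v s).
Proof.
move=> s_move w u Vex_u.
have [reach | not_reach] := classic (reachable v s (rcons w u)).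
  by rewrite /restrict guarded_in //; exact: s_move.
by rewrite /restrict guarded_out //; exact: round_robin_move.
Qed.

Lemma play_restrict v s t :
  is_strategy Vex E Forall t -> play Vex v (restrict v s) t = play Vex v s t.
Proof.
move=> t_move; apply: play_complies => //; last exact: play_complies_Forall.
move=> n Vex_n; rewrite /restrict guarded_in; first exact: play_complies_Exists.
by exists t; rewrite // -prefixS; exact: prefix_of_prefix.
Qed.

Lemma restrict_fair_strategy v s :
  (forall t, is_strategy Vex E Forall t -> fair Vex Ef Exists (play Vex v s t)) ->
  fair_strategy Vex E Ef Exists (restrict v s).
Proof.
move=> fair_plays tau tau_play.
have closed : prefix_closed (reachable v s).
  by move=> h m [t t_move pre]; exists t; last exact: prefix_of_take.
move=> /(complies_guarded closed)[[reach comp_s] | ev]; last exact: round_robin_fair.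
have tau0 : tau 0 = v by have [t _ []] := reach 1.
rewrite -(play_complies tau0 comp_s (@complies_follow Forall tau)).
by apply: fair_plays => w u _; exact: follow_move.
Qed.

End Arena.

Theorem lemma2 (V : finType) (Vex : pred V) (E Ef : rel V)
    (alpha : (nat -> V) -> Prop) (v : V) :
  fair_arena E Ef ->
  omega_regular alpha ->
  (exists s, is_strategy Vex E Exists s /\ fair_strategy Vex E Ef Exists s /\
     forall t, is_strategy Vex E Forall t -> fair_strategy Vex E Ef Forall t ->
       alpha (play Vex v s t))
  <->
  (exists s, is_strategy Vex E Exists s /\
     forall t, is_strategy Vex E Forall t ->
       fair Vex Ef Exists (play Vex v s t) /\
       (fair Vex Ef Forall (play Vex v s t) -> alpha (play Vex v s t))).
Proof.
move=> [E_total Ef_sub_E] _; split.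
- move=> [s [s_move [s_fair s_wins]]]; exists s; split=> // t t_move.
  set P := play Vex v s t.
  have P_play : is_play E P := play_is_play v s_move t_move.
  have P_comp : complies Vex Exists s P := @play_complies_Exists _ _ v s t.
  split=> [|P_fair]; first exact: s_fair.
  have <- : play Vex v s (follow E P) = P.
    exact: play_complies (erefl v) P_comp (@complies_follow _ _ E Forall P).
  apply: s_wins; last exact: follow_fair_strategy.
  by move=> w u _; exact: follow_move.
- move=> [s [s_move s_wins]]; exists (restrict Vex E v s).
  split; first exact: restrict_move.
  split=> [|t t_move t_fair].
    by apply: restrict_fair_strategy => // t /s_wins[].
  rewrite play_restrict //; apply: (s_wins t t_move).2; apply: t_fair.
    exact: play_is_play.
  exact: play_complies_Forall.
Qed.
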